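(* Let $\mu$, weights $\vec w_\ell=(w_{\ell,1},\dots,w_{\ell,p_\ell})$, $\ell=1,2$, be as in the context, and let $\vec n_\ell,\vec n'_\ell\in\mathbb N^{p_\ell}$, $\ell=1,2$, be compositions. Then there exist semi-infinite permutation matrices $\pi_{\vec n'_\ell,\vec n_\ell}$ (with $\pi\pi^\top=\pi^\top\pi=I$), $\ell=1,2$, such that $$g_{\vec n_1',\vec n_2'}=\pi_{\vec n_1',\vec n_1}\,g_{\vec n_1,\vec n_2}\,\pi_{\vec n_2',\vec n_2}^\top .$$
   Context: $\mu$ is a finite Borel measure on an interval $\Delta\subset\mathbb R$ with infinitely many points in its support, not changing sign; $w_{\ell,a}$ are real integrable functions on $\Delta$ not changing sign, and all integrals below are finite. For a composition $\vec n=(n_1,\dots,n_p)\in\mathbb N^p$, $|\vec n|=\sum n_a$, each $i\in\mathbb Z_+$ is uniquely written $i=q|\vec n|+n_1+\dots+n_{a-1}+r$ with $q\in\mathbb Z_+$, $a\in\{1,\dots,p\}$, $0\le r<n_a$; set $a(i)=a$, $k(i)=qn_a+r$. The weighted monomial string $\xi_{\vec n}(x)$ associated with weights $(w_1,\dots,w_p)$ and $\vec n$ is the semi-infinite column vector whose $i$-th entry is $w_{a(i)}(x)x^{k(i)}$. The moment matrix is $g_{\vec n_1,\vec n_2}=\int\xi_{\vec n_1}(x)\xi_{\vec n_2}(x)^\top d\mu(x)$, where $\xi_{\vec n_\ell}$ is built from $\vec w_\ell$. *)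

From HB Require Import structures.
From mathcomp Require Import all_boot all_order all_algebra.
From mathcomp Require Import all_classical all_reals all_analysis.
Set Implicit Arguments. Unset Strict Implicit. Unset Printing Implicit Defensive.
Import Order.TTheory GRing.Theory Num.Theory.
Import numFieldNormedType.Exports.
Local Open Scope classical_set_scope.
Local Open Scope ring_scope.

Definition composition (n : seq nat) : bool := all (fun k => 0 < k)%N n.

Definition comp_size (n : seq nat) : nat := sumn n.

(* Given m < |n|, find (a, r) (a 0-based) with m = n_1+...+n_{a-1} + r, 0 <= r < n_a. *)
Fixpoint comp_split (n : seq nat) (m : nat) : nat * nat :=
  match n with
  | [::] => (0%N, m)
  | na :: n' => if (m < na)%N then (0%N, m)
                else let ar := comp_split n' (m - na) in (ar.1.+1, ar.2)
  end.

Definition idx_a (n : seq nat) (i : nat) : nat :=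
  (comp_split n (i %% comp_size n)).1.

Definition idx_k (n : seq nat) (i : nat) : nat :=
  let ar := comp_split n (i %% comp_size n) in
  (i %/ comp_size n * nth 0%N n ar.1 + ar.2)%N.

Definition wstring {R : realType} (w : seq (R -> R)) (n : seq nat) (i : nat) (x : R) : R :=
  nth (fun _ => 0) w (idx_a n i) x * x ^+ idx_k n i.

(* Moment matrix g_{n1,n2} = \int xi_{n1} xi_{n2}^T d(s * nu) over Delta,
   where the (sign-constant) measure mu is s * nu with s = +-1, nu a positive measure. *)
Definition moment_mx {R : realType} (nu : {measure set R -> \bar R}) (s : R) (D : set R)
  (w1 : seq (R -> R)) (n1 : seq nat) (w2 : seq (R -> R)) (n2 : seq nat) : nat -> nat -> R :=
  fun i j => s * fine (\int[nu]_(x in D) (wstring w1 n1 i x * wstring w2 n2 j x)%:E).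

Definition simx (R : realType) := nat -> nat -> R.
Definition simx_mul {R : realType} (A B : simx R) : simx R :=
  fun i j => limn (fun N => \sum_(0 <= k < N) (A i k * B k j)).
Definition simx_tr {R : realType} (A : simx R) : simx R := fun i j => A j i.

Definition is_perm_simx {R : realType} (P : simx R) : Prop :=
  exists sigma : nat -> nat, bijective sigma /\
    forall i j, P i j = (sigma i == j)%:R.

Definition msupport {R : realType} (nu : {measure set R -> \bar R}) : set R :=
  [set x | forall U : set R, open U -> U x -> (0 < nu U)%E].

Definition no_sign_change {R : realType} (D : set R) (f : R -> R) : Prop :=
  (forall x, D x -> 0 <= f x) \/ (forall x, D x -> f x <= 0).

From HB Require Import structures.
From mathcomp Require Import all_boot all_order all_algebra.
From mathcomp Require Import all_classical all_reals all_analysis.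
From mathcomp Require Import zify.
Import Order.TTheory GRing.Theory Num.Theory.
Import numFieldNormedType.Exports.
Local Open Scope classical_set_scope.
Local Open Scope ring_scope.

(* Proof idea: for a composition n of p, the map i |-> (a(i), k(i)) is a
   bijection from N onto {0,...,p-1} x N, and the entries of xi_n only depend
   on (a(i), k(i)).  Hence xi_n' is xi_n reindexed by the bijection of N that
   sends i to the index with the same pair (a, k) for n, and the moment matrix
   is reindexed accordingly; multiplying by a permutation matrix is exactly
   such a reindexing, since each row or column series has a single nonzero
   term. *)

Lemma comp_splitP {n : seq nat} {m : nat} : (m < sumn n)%N ->
  let ar := comp_split n m in
  [/\ (ar.1 < size n)%N, (ar.2 < nth 0%N n ar.1)%N
    & m = (sumn (take ar.1 n) + ar.2)%N].
Proof.
elim: n m => [|na n IH] m //= Hm.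
case: ifP => Hlt /=; first by rewrite add0n.
have [] := IH (m - na)%N; first lia.
by split => //=; lia.
Qed.

Lemma comp_split_offset (n : seq nat) (a r : nat) : (a < size n)%N ->
  (r < nth 0%N n a)%N -> comp_split n (sumn (take a n) + r) = (a, r).
Proof.
elim: n a => [|na n IH] [|a] //= Ha Hr; first by rewrite add0n Hr.
rewrite ifF; last lia.
by rewrite (_ : (na + sumn (take a n) + r - na = sumn (take a n) + r)%N) ?IH //; lia.
Qed.

Lemma sumn_take_nth_le {n : seq nat} {a : nat} : (a < size n)%N ->
  (sumn (take a n) + nth 0%N n a <= sumn n)%N.
Proof. by elim: n a => [|na n IH] [|a] //= Ha; [lia | have := IH a Ha; lia]. Qed.

Section CompositionIndex.

Variable n : seq nat.
Hypothesis cn : composition n.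

Lemma composition_nth_gt0 {a : nat} : (a < size n)%N -> (0 < nth 0%N n a)%N.
Proof. by move=> Ha; apply: (allP cn); rewrite mem_nth. Qed.

Lemma comp_size_gt0 : (0 < size n)%N -> (0 < comp_size n)%N.
Proof.
move=> Hs; have := composition_nth_gt0 Hs; have := sumn_take_nth_le Hs.
rewrite /comp_size; lia.
Qed.

(* The inverse of i |-> (a(i), k(i)): writing k = q n_a + r with r < n_a, the
   index is i = q |n| + n_1 + ... + n_(a-1) + r. *)
Definition comp_index (a k : nat) : nat :=
  (k %/ nth 0%N n a * comp_size n + sumn (take a n) + k %% nth 0%N n a)%N.

Lemma idx_comp_index (a k : nat) : (a < size n)%N ->
  idx_a n (comp_index a k) = a /\ idx_k n (comp_index a k) = k.
Proof.
move=> Ha; have na_gt0 := composition_nth_gt0 Ha.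
have r_lt : (k %% nth 0%N n a < nth 0%N n a)%N by rewrite ltn_mod.
have offset_lt : (sumn (take a n) + k %% nth 0%N n a < comp_size n)%N.
  by have := sumn_take_nth_le Ha; rewrite /comp_size; lia.
have size_gt0 : (0 < comp_size n)%N by lia.
have Emod : (comp_index a k %% comp_size n = sumn (take a n) + k %% nth 0%N n a)%N.
  by rewrite /comp_index -addnA modnMDl modn_small.
have Ediv : (comp_index a k %/ comp_size n = k %/ nth 0%N n a)%N.
  by rewrite /comp_index -addnA divnMDl // (divn_small offset_lt) addn0.
rewrite /idx_a /idx_k Emod Ediv comp_split_offset //.
by split => //=; rewrite -divn_eq.
Qed.

Hypothesis n_nil : (0 < size n)%N.

Lemma idx_a_lt (i : nat) : (idx_a n i < size n)%N.
Proof.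
by have [] := comp_splitP (ltn_pmod i (comp_size_gt0 n_nil)).
Qed.

Lemma comp_index_idx (i : nat) : comp_index (idx_a n i) (idx_k n i) = i.
Proof.
have [Ha Hr Hm] := comp_splitP (ltn_pmod i (comp_size_gt0 n_nil)).
rewrite /comp_index /idx_a /idx_k.
set a := (comp_split n (i %% comp_size n)).1 in Ha Hr Hm *.
set r := (comp_split n (i %% comp_size n)).2 in Hr Hm *.
have na_gt0 : (0 < nth 0%N n a)%N by lia.
rewrite divnMDl // (divn_small Hr) addn0 modnMDl (modn_small Hr).
by rewrite -addnA -Hm -divn_eq.
Qed.

End CompositionIndex.

Section Recompose.

Variables n n' : seq nat.
Hypotheses (cn : composition n) (cn' : composition n').
Hypotheses (size_nn' : size n = size n') (n_nil : (0 < size n)%N).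

Definition recompose (i : nat) : nat := comp_index n (idx_a n' i) (idx_k n' i).

Lemma idx_recompose (i : nat) :
  idx_a n (recompose i) = idx_a n' i /\ idx_k n (recompose i) = idx_k n' i.
Proof.
by apply: idx_comp_index => //; rewrite size_nn' idx_a_lt // -size_nn'.
Qed.

Lemma wstring_recompose (R : realType) (w : seq (R -> R)) (i : nat) (x : R) :
  wstring w n' i x = wstring w n (recompose i) x.
Proof. by rewrite /wstring; have [-> ->] := idx_recompose i. Qed.

End Recompose.

Lemma recomposeK (n n' : seq nat) : composition n -> composition n' ->
  size n = size n' -> (0 < size n)%N -> cancel (recompose n n') (recompose n' n).
Proof.
move=> cn cn' Hs Hp i; rewrite /recompose.
have [-> ->] := idx_recompose _ _ cn cn' Hs Hp i.
by apply: comp_index_idx; rewrite -?Hs.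
Qed.

Lemma recompose_bij (n n' : seq nat) : composition n -> composition n' ->
  size n = size n' -> (0 < size n)%N -> bijective (recompose n n').
Proof.
move=> cn cn' Hs Hp; exists (recompose n' n); first exact: recomposeK.
by apply: recomposeK => //; rewrite -Hs.
Qed.

Lemma moment_mx_recompose (R : realType) (nu : {measure set R -> \bar R})
    (s : R) (D : set R) (w1 w2 : seq (R -> R)) (n1 n1' n2 n2' : seq nat) :
  composition n1 -> composition n1' -> size n1 = size n1' -> (0 < size n1)%N ->
  composition n2 -> composition n2' -> size n2 = size n2' -> (0 < size n2)%N ->
  forall i j, moment_mx nu s D w1 n1' w2 n2' i j =
    moment_mx nu s D w1 n1 w2 n2 (recompose n1 n1' i) (recompose n2 n2' j).
Proof.
move=> cn1 cn1' E1 P1 cn2 cn2' E2 P2 i j.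
rewrite /moment_mx; congr (_ * fine _); apply: eq_integral => x _.
by rewrite (wstring_recompose _ _ cn1 cn1' E1 P1) (wstring_recompose _ _ cn2 cn2' E2 P2).
Qed.

Section PermutationMatrix.

Variable R : realType.

Definition perm_simx (sigma : nat -> nat) : simx R :=
  fun i j => (sigma i == j)%:R.

Lemma is_perm_simx_perm (sigma : nat -> nat) :
  bijective sigma -> is_perm_simx (perm_simx sigma).
Proof. by move=> bij_sigma; exists sigma. Qed.

Lemma sum_nat_delta (m : nat) (f : nat -> R) (N : nat) :
  \sum_(0 <= k < N) ((m == k)%:R * f k) = (m < N)%N%:R * f m.
Proof.
elim: N => [|N IH]; first by rewrite big_nil mul0r.
rewrite big_nat_recr //= IH.
have [->|Hne] := eqVneq m N; first by rewrite ltnn ltnSn mul0r add0r.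
by rewrite [in RHS]ltnS [in RHS]leq_eqVlt (negbTE Hne) /= mul0r addr0.
Qed.

Lemma limn_sum_delta (m : nat) (f : nat -> R) :
  limn (fun N => \sum_(0 <= k < N) ((m == k)%:R * f k)) = f m.
Proof.
apply: cvg_lim => //; apply: cvg_near_cst.
near=> N; rewrite sum_nat_delta (_ : (m < N)%N) ?mul1r //.
near: N; exact: nbhs_infty_gt.
Unshelve. all: by end_near.
Qed.

Lemma perm_simx_mull (sigma : nat -> nat) (A : simx R) (i j : nat) :
  simx_mul (perm_simx sigma) A i j = A (sigma i) j.
Proof. exact: limn_sum_delta. Qed.

Lemma perm_simx_mulr_tr (sigma : nat -> nat) (A : simx R) (i j : nat) :
  simx_mul A (simx_tr (perm_simx sigma)) i j = A i (sigma j).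
Proof.
rewrite /simx_mul /simx_tr -(limn_sum_delta (sigma j) (A i)).
by congr (limn _); apply: funext => N; apply: eq_bigr => k _; rewrite mulrC.
Qed.

End PermutationMatrix.

Theorem proposition2p1 (R : realType) (p1 p2 : nat)
  (n1 n1' n2 n2' : seq nat)
  (hp1 : (0 < p1)%N) (hp2 : (0 < p2)%N)
  (hn1 : size n1 = p1) (hn1' : size n1' = p1)
  (hn2 : size n2 = p2) (hn2' : size n2' = p2)
  (cn1 : composition n1) (cn1' : composition n1')
  (cn2 : composition n2) (cn2' : composition n2') :
  exists P1 P2 : simx R,
    is_perm_simx P1 /\ is_perm_simx P2 /\
    forall (D : set R) (nu : {finite_measure set R -> \bar R}) (s : R)
      (w1 w2 : seq (R -> R)),
      is_interval D -> measurable D ->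
      nu (~` D) = 0%E ->
      infinite_set (msupport nu) ->
      (s = 1 \/ s = -1) ->
      size w1 = p1 -> size w2 = p2 ->
      (forall f, f \in w1 -> nu.-integrable D (EFin \o f) /\ no_sign_change D f) ->
      (forall f, f \in w2 -> nu.-integrable D (EFin \o f) /\ no_sign_change D f) ->
      (forall i j, nu.-integrable D
         (fun x => (wstring w1 n1 i x * wstring w2 n2 j x)%:E)) ->
      (forall i j, nu.-integrable D
         (fun x => (wstring w1 n1' i x * wstring w2 n2' j x)%:E)) ->
      moment_mx nu s D w1 n1' w2 n2' =
      simx_mul (simx_mul P1 (moment_mx nu s D w1 n1 w2 n2)) (simx_tr P2).
Proof.
have E1 : size n1 = size n1' by rewrite hn1 hn1'.
have E2 : size n2 = size n2' by rewrite hn2 hn2'.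
have S1 : (0 < size n1)%N by rewrite hn1.
have S2 : (0 < size n2)%N by rewrite hn2.
exists (perm_simx R (recompose n1 n1')), (perm_simx R (recompose n2 n2')).
split; first exact/is_perm_simx_perm/recompose_bij.
split; first exact/is_perm_simx_perm/recompose_bij.
move=> D nu s w1 w2 *; apply: funext => i; apply: funext => j.
rewrite perm_simx_mulr_tr perm_simx_mull.
exact: moment_mx_recompose.
Qed.
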